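(* Let $N\ge1$, let $\Psi_N$ be the $N\times N$ lower triangular matrix $(\Psi_N)_{jk}=\binom{j}{k}$, $0\le j,k<N$, let $\Lambda_N=\mathrm{diag}(1,-1,1,\dots,(-1)^{N-1})$, and let $J_N$ be the $N\times N$ symmetric tridiagonal matrix with $(J_N)_{kk}=k(2k^2+3k+2-N^2)$ and $(J_N)_{k,k+1}=(J_N)_{k+1,k}=(k+1)(N^2-(k+1)^2)$. Set $B_N=-\Lambda_NJ_N\Lambda_N+(N^2-1)I_N$ and $S_N=\Psi_N^\intercal\Psi_N$, i.e. $(S_N)_{jk}=\sum_{i=0}^{N-1}\binom{i}{j}\binom{i}{k}$. Then $B_NS_N=S_NB_N$.
   Context: Matrix indices start at $0$; $I_N$ is the $N\times N$ identity matrix. *)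

From mathcomp Require Import all_boot all_order all_algebra.
Set Implicit Arguments. Unset Strict Implicit. Unset Printing Implicit Defensive.
Import GRing.Theory Num.Theory.
Local Open Scope ring_scope.

Definition PsiN (N : nat) : 'M[int]_N := \matrix_(j < N, k < N) ('C(j, k))%:Z.

Definition LambdaN (N : nat) : 'M[int]_N :=
  \matrix_(j < N, k < N) (if j == k then (-1) ^+ j else 0).

Definition JN (N : nat) : 'M[int]_N :=
  \matrix_(j < N, k < N)
    (let n : int := N%:Z in
     let a : int := j%:Z in
     let b : int := k%:Z in
     if (val j == val k) then a * (2 * a ^+ 2 + 3 * a + 2 - n ^+ 2)
     else if (val k == (val j).+1)%N then b * (n ^+ 2 - b ^+ 2)
     else if (val j == (val k).+1)%N then a * (n ^+ 2 - a ^+ 2)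
     else 0).

Definition BN (N : nat) : 'M[int]_N :=
  - (LambdaN N *m JN N *m LambdaN N) + ((N%:Z) ^+ 2 - 1)%:M.

Definition SN (N : nat) : 'M[int]_N := (PsiN N)^T *m PsiN N.

From mathcomp Require Import all_boot all_order all_algebra.
From mathcomp Require Import ring zify.

(* Both B_N and J_N are symmetric tridiagonal, and Psi_N intertwines them:
   Psi_N B_N = J_N Psi_N.  Entrywise this is a polynomial identity in the three
   neighbouring binomials of row i and those of rows i-1, i+1, which follows
   from the Pascal-type recurrences C(i,l+1)(l+1) = C(i,l)(i-l) and
   i C(i-1,l) = (i-l) C(i,l).  Then, by symmetry of B_N and J_N,
   B S = (Psi B)^T Psi = (J Psi)^T Psi = Psi^T J Psi = Psi^T Psi B = S B. *)

Set Implicit Arguments.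
Unset Strict Implicit.
Unset Printing Implicit Defensive.
Import GRing.Theory.
Local Open Scope ring_scope.

Lemma trmx_mul_self_commute (R : comPzRingType) (m n : nat)
    (P : 'M[R]_(m, n)) (B : 'M_n) (J : 'M_m) :
  B^T = B -> J^T = J -> P *m B = J *m P ->
  B *m (P^T *m P) = (P^T *m P) *m B.
Proof.
move=> symB symJ PB; rewrite mulmxA -{1}symB -trmx_mul PB trmx_mul symJ.
by rewrite -!mulmxA PB.
Qed.

Section SymmetricTridiagonal.

Variables (R : comPzRingType) (N : nat).

Definition symtri (d w : nat -> R) : 'M[R]_N :=
  \matrix_(j < N, k < N)
    (if (j : nat) == k then d j
     else if (k : nat) == j.+1 then w k
     else if (j : nat) == k.+1 then w j
     else 0).

Lemma symtri_sym d w : (symtri d w)^T = symtri d w.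
Proof.
apply/matrixP => -[j hj] [k hk]; rewrite !mxE /=.
case: (eqVneq j k) => [-> //|ne].
by do 2 case: eqP => //; lia.
Qed.

Lemma symtri_entry d w (j k : 'I_N) :
  symtri d w j k = (if (j : nat) == k then d k else 0)
    + (if (j : nat).+1 == k then w k else 0)
    + (if (j : nat) == k.+1 then w j else 0).
Proof.
case: j k => j hj [k hk]; rewrite mxE /=.
case: (eqVneq j k) => [->|ne]; first by rewrite !ifN ?addr0 //; lia.
rewrite add0r eq_sym; case: (eqVneq k j.+1) => [->|_]; last by rewrite add0r.
by rewrite ifN ?addr0 //; lia.
Qed.

Variables (d w : nat -> R).
(* These make the boundary terms of the product formulas vanish. *)
Hypotheses (w0 : w 0%N = 0) (wN : w N = 0).

Lemma mul_mx_symtri (f : nat -> nat -> R) (i l : 'I_N) :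
  ((\matrix_(i < N, j < N) f i j) *m symtri d w) i l =
  f i l * d l + f i l.-1 * w l + f i l.+1 * w l.+1.
Proof.
rewrite mxE; under eq_bigr => j _ do
  rewrite mxE symtri_entry !mulrDr !(fun_if ( *%R _)) !mulr0.
rewrite !big_split -!big_mkcond /=.
rewrite (big_ord1_eq _ (fun j => f i j * d l)) ltn_ord.
rewrite (big_ord1_eq _ (fun j => f i j * w j)).
congr (_ + _ + _).
- case: l => -[|l] /= hl; first by rewrite w0 !mulr0 big1.
  under eq_bigl => j do rewrite eqSS.
  by rewrite (big_ord1_eq _ (fun j => f i j * w l.+1)) (ltnW hl).
- case: ltnP => // hl.
  by rewrite (_ : l.+1 = N) ?wN ?mulr0 //; apply/eqP; rewrite eqn_leq hl ltn_ord.
Qed.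

Lemma symtri_mul_mx (f : nat -> nat -> R) (i l : 'I_N) :
  (symtri d w *m \matrix_(i < N, j < N) f i j) i l =
  d i * f i l + w i * f i.-1 l + w i.+1 * f i.+1 l.
Proof.
have trA : (\matrix_(i < N, j < N) f i j)^T = \matrix_(i < N, j < N) f j i.
  by apply/matrixP => ? ?; rewrite !mxE.
rewrite -(trmxK (symtri d w *m _)) [LHS]mxE trmx_mul trA symtri_sym.
rewrite (mul_mx_symtri (fun i j => f j i)).
by rewrite [_ * d _]mulrC [_ * w i]mulrC [_ * w i.+1]mulrC.
Qed.

End SymmetricTridiagonal.

Arguments symtri {R} N d w.

Definition JN_diag (N k : nat) : int :=
  k%:Z * (2 * k%:Z ^+ 2 + 3 * k%:Z + 2 - N%:Z ^+ 2).

Definition JN_off (N k : nat) : int := k%:Z * (N%:Z ^+ 2 - k%:Z ^+ 2).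

Lemma JN_off0 N : JN_off N 0 = 0.
Proof. exact: mul0r. Qed.

Lemma JN_offN N : JN_off N N = 0.
Proof. by rewrite /JN_off subrr mulr0. Qed.

Lemma JN_symtri N : JN N = symtri N (JN_diag N) (JN_off N).
Proof. by apply/matrixP => j k; rewrite !mxE. Qed.

Lemma LambdaN_diag N : LambdaN N = diag_mx (\row_(j < N) (-1) ^+ j).
Proof. by apply/matrixP => j k; rewrite !mxE; case: eqP => [->|]. Qed.

Lemma sign_conj_symtri N (d w : nat -> int) :
  LambdaN N *m symtri N d w *m LambdaN N = symtri N d (fun k => - w k).
Proof.
rewrite LambdaN_diag mul_diag_mx mul_mx_diag; apply/matrixP => -[j hj] [k hk].
rewrite !mxE /= mulrAC -exprD -signr_odd oddD.
case: (eqVneq j k) => [->|_]; first by rewrite addbb mul1r.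
by case: eqP => [->|_]; [|case: eqP => [->|_]]; rewrite ?mulr0 //= ?addbN ?addNb addbb mulN1r.
Qed.

Lemma BN_symtri N :
  BN N = symtri N (fun k => N%:Z ^+ 2 - 1 - JN_diag N k) (JN_off N).
Proof.
rewrite /BN JN_symtri sign_conj_symtri; apply/matrixP => j k; rewrite !mxE.
case: (eqVneq j k) => [->|ne]; first by rewrite !eqxx mulr1n addrC.
have ne' : (j : nat) != k := ne.
rewrite (negbTE ne') mulr0n addr0.
by case: ifP => _; [|case: ifP => _]; rewrite ?opprK ?oppr0.
Qed.

Lemma tridiag_binomial_identity (R : comPzRingType) (n i l a b c d e : R) :
  (1 + l) * b = (i - l) * c -> i * d = (i - l) * c ->
  l * c = (1 + i - l) * (e - c) -> l * a = l * (e - c) ->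
  c * (n ^+ 2 - 1 - l * (2 * l ^+ 2 + 3 * l + 2 - n ^+ 2))
    + a * (l * (n ^+ 2 - l ^+ 2)) + b * ((1 + l) * (n ^+ 2 - (1 + l) ^+ 2))
  = i * (2 * i ^+ 2 + 3 * i + 2 - n ^+ 2) * c + i * (n ^+ 2 - i ^+ 2) * d
    + (1 + i) * (n ^+ 2 - (1 + i) ^+ 2) * e.
Proof.
move=> succ_b down_d succ_c pred_a; apply/eqP; rewrite -subr_eq0; apply/eqP.
transitivity ((n ^+ 2 - l ^+ 2) * (l * a - l * (e - c))
  + (n ^+ 2 - l ^+ 2 - l * (1 + i) - (1 + i) ^+ 2) * (l * c - (1 + i - l) * (e - c))
  + (n ^+ 2 - (1 + l) ^+ 2) * ((1 + l) * b - (i - l) * c)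
  - (n ^+ 2 - i ^+ 2) * (i * d - (i - l) * c)); first by ring.
by rewrite succ_b down_d succ_c pred_a !subrr !mulr0 !addr0 subrr.
Qed.

Lemma mul_bin_left_int (i l : nat) :
  (1 + l%:Z) * 'C(i, l.+1)%:Z = (i%:Z - l%:Z) * 'C(i, l)%:Z.
Proof.
have := mul_bin_left i l; case: (leqP l i) => [li|il] eq_nat; first by nia.
by rewrite !bin_small ?mulr0 //; lia.
Qed.

Lemma mul_bin_down_int (i l : nat) :
  i%:Z * 'C(i.-1, l)%:Z = (i%:Z - l%:Z) * 'C(i, l)%:Z.
Proof.
have := mul_bin_down i l; case: (leqP l i) => [li|il] eq_nat; first by nia.
by rewrite !bin_small ?mulr0 //; lia.
Qed.

Lemma binS_sub_int (i l : nat) : 'C(i.+1, l.+1)%:Z - 'C(i, l.+1)%:Z = 'C(i, l)%:Z.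
Proof. by rewrite binS PoszD addrC addKr. Qed.

(* The factor [l] absorbs the junk value [l.-1 = 0] at [l = 0]. *)
Lemma mul_bin_pred_int (i l : nat) :
  l%:Z * 'C(i, l.-1)%:Z = l%:Z * ('C(i.+1, l)%:Z - 'C(i, l)%:Z).
Proof. by case: l => [|l]; rewrite ?mul0r // binS_sub_int. Qed.

Lemma mul_bin_up_int (i l : nat) :
  l%:Z * 'C(i, l)%:Z = (1 + i%:Z - l%:Z) * ('C(i.+1, l)%:Z - 'C(i, l)%:Z).
Proof.
case: l => [|l]; first by rewrite !bin0 subrr !mulr0 mul0r.
by rewrite binS_sub_int intS mul_bin_left_int opprD addrACA subrr add0r.
Qed.

Lemma PsiN_mul_BN N : PsiN N *m BN N = JN N *m PsiN N.
Proof.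
apply/matrixP => i l.
pose binz (j k : nat) := 'C(j, k)%:Z.
rewrite BN_symtri JN_symtri /PsiN (mul_mx_symtri _ (JN_off0 N) (JN_offN N) binz).
rewrite (symtri_mul_mx _ (JN_off0 N) (JN_offN N) binz).
rewrite /JN_diag /JN_off !intS; apply: tridiag_binomial_identity.
- exact: mul_bin_left_int.
- exact: mul_bin_down_int.
- exact: mul_bin_up_int.
- exact: mul_bin_pred_int.
Qed.

Theorem mainTheorem7 (N : nat) (hN : (1 <= N)%N) :
  BN N *m SN N = SN N *m BN N.
Proof.
apply: trmx_mul_self_commute (PsiN_mul_BN N).
- by rewrite BN_symtri symtri_sym.
- by rewrite JN_symtri symtri_sym.
Qed.
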